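(* Let $G = K \rtimes_\varphi \langle t\rangle$ be a finitely generated group, where $K$ is abelian, $\langle t\rangle$ is infinite cyclic and $\varphi\in\mathrm{Aut}(K)$. Let $R$ be a finite symmetric subset of $K$ such that $S=R\cup\{t^{\pm1}\}$ generates $G$. Then for every $g=(x,t^m)\in G$ with $m\ge0$ there is a word $w\in W'$ that is a geodesic and represents $g$.
   Context: $K$ is written additively and elements of $G$ are pairs $(x,t^m)$ with $(x,t^m)(x',t^{m'})=(x+\varphi^m(x'),t^{m+m'})$; $m$ is the $t$-exponent sum of $(x,t^m)$. $W(R)$ denotes the set of words in the alphabet $R$. The length of a word is the length of its free reduction; a word is a geodesic if its length equals the word length (w.r.t. $S$) of the element it represents. $W'$ is the set of geodesic words of the form $t^{-p}u_0\,t\,u_1\,t\cdots u_{d-1}\,t\,u_d\,t^{-q}t^{m}$ with integers $p,q,m\ge0$, $d=p+q$ and $u_0,\dots,u_d\in W(R)$. *)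

From HB Require Import structures.
From mathcomp Require Import all_boot all_order all_algebra.
Set Implicit Arguments. Unset Strict Implicit. Unset Printing Implicit Defensive.
Import Order.TTheory GRing.Theory Num.Theory.
Local Open Scope ring_scope.

(* Semidirect product G = K x|_phi <t>: elements are pairs (x, m) : K * int,
   standing for (x, t^m). phi is an additive bijection of K with inverse phiinv. *)

Section SemiDirect.
Variable K : zmodType.
Variables (phi phiinv : K -> K).

Definition phipow (m : int) (x : K) : K :=
  match m with
  | Posz n => iter n phi x
  | Negz n => iter n.+1 phiinv x
  end.

Definition mulG (g h : K * int) : K * int :=
  (g.1 + phipow g.2 h.1, g.2 + h.2)%R.

(* Letters of the alphabet S = R u {t, t^-1}:
   inl r  is the letter r in R,  inr true is t,  inr false is t^-1. *)
Definition letter := (K + bool)%type.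

Definition letter_val (a : letter) : K * int :=
  match a with
  | inl r => (r, 0%R)
  | inr true => (0%R, 1%R)
  | inr false => (0%R, (-1)%R)
  end.

Definition evalw (w : seq letter) : K * int :=
  foldr (fun a g => mulG (letter_val a) g) (0%R, 0%R) w.

Definition letter_inv (a : letter) : letter :=
  match a with
  | inl r => inl (- r)
  | inr b => inr (~~ b)
  end.

Definition freered (w : seq letter) : seq letter :=
  foldr (fun a acc =>
           match acc with
           | b :: acc' => if b == letter_inv a then acc' else a :: acc
           | [::] => [:: a]
           end) [::] w.

Definition wlength (w : seq letter) : nat := size (freered w).

Definition overS (R : seq K) (w : seq letter) : Prop :=
  forall a, a \in w -> match a with inl r => r \in R | inr _ => true end.

Definition geodesic (R : seq K) (w : seq letter) : Prop :=
  overS R w /\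
  (exists w0, [/\ overS R w0, evalw w0 = evalw w & size w0 = wlength w]) /\
  (forall w', overS R w' -> evalw w' = evalw w -> wlength w <= size w')%N.

Definition Rword (u : seq K) : seq letter := map inl u.

Definition interleave (us : seq (seq K)) : seq letter :=
  match us with
  | [::] => [::]
  | u0 :: rest => Rword u0 ++ flatten [seq inr true :: Rword u | u <- rest]
  end.

Definition inWprime (R : seq K) (w : seq letter) : Prop :=
  geodesic R w /\
  exists (p q m : nat) (us : seq (seq K)),
    [/\ size us = (p + q).+1,
        (forall u, u \in us -> forall r, r \in u -> r \in R) &
        w = nseq p (inr false) ++ interleave us ++ nseq q (inr false)
              ++ nseq m (inr true)].

End SemiDirect.

From HB Require Import structures.
From mathcomp Require Import all_boot all_order all_algebra.
From mathcomp Require Import zify.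
From Stdlib Require Import Classical Wf_nat.
Import Order.TTheory GRing.Theory Num.Theory.
Set Implicit Arguments. Unset Strict Implicit.
Local Open Scope ring_scope.

(* Take a shortest word [v] representing [(x, t^m)].  Scanning [v] from the right, each letter
   is absorbed into a normal form [t^-p u_0 t u_1 ... t u_d t^-e] with [u_i] in [W(R)]: a
   letter of [R] joins the block at height 0, where it acts by translation, and [t^{+-1}]
   shifts the heights or opens a new empty block at an end.  As the t-letters of [v] visit the
   heights [-p] and [d - p] and end at [m >= 0], the normal form is no longer than [v].
   Rewriting [t^-e] as [t^-(e+m) t^m] keeps the free length and yields a word of [W']. *)

Lemma exists_shortest (T : Type) (P : seq T -> Prop) :
  (exists w, P w) -> exists v, P v /\ forall w, P w -> (size v <= size w)%N.
Proof.
move=> [w Pw].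
have [n [[[v [Pv <-]] vmin] _]] :=
  dec_inh_nat_subset_has_unique_least_element (fun n => exists v, P v /\ size v = n)
    (fun n => classic _) (ex_intro _ (size w) (ex_intro _ w (conj Pw erefl))).
by exists v; split=> // w' Pw'; apply/ssrnat.leP; apply: vmin; exists w'.
Qed.

Section Words.
Variable K : zmodType.

Local Notation t := (inr true : letter K).
Local Notation tN := (inr false : letter K).

Lemma freered_cons (a : letter K) w :
  freered (a :: w) =
  if freered w is b :: w' then (if b == letter_inv a then w' else a :: freered w)
  else [:: a].
Proof. by []. Qed.

Lemma wlength_cons (a : letter K) w : (wlength (a :: w) <= (wlength w).+1)%N.
Proof.
rewrite /wlength freered_cons; case: (freered w) => [|b w'] //=.
by case: ifP => //= _; lia.
Qed.

Lemma wlength_cat (A B : seq (letter K)) : (wlength (A ++ B) <= size A + wlength B)%N.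
Proof. by elim: A => //= a A IH; apply: leq_trans (wlength_cons _ _) _. Qed.

Lemma mem_freered (w : seq (letter K)) a : a \in freered w -> a \in w.
Proof.
elim: w => [|b w IH] //; rewrite freered_cons inE.
case: (freered w) IH => [|c w'] IH; first by rewrite inE => ->.
case: ifP => _ /=; first by move=> aw; rewrite IH ?inE ?aw ?orbT.
by rewrite inE => /orP[-> // | /IH ->]; rewrite orbT.
Qed.

Lemma freered_nseq_tN_t k m :
  freered (nseq k tN ++ nseq m t) =
  if (k <= m)%N then nseq (m - k) t else nseq (k - m) tN.
Proof.
elim: k => [|k IH].
  by rewrite subn0; elim: m => [|m /= ->] //; case: m.
rewrite [nseq _ _ ++ _]/= freered_cons IH.
case: (ltngtP k m) => [km|mk|->]; last by rewrite subnn subSnn.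
  by rewrite (_ : (m - k = (m - k.+1).+1)%N); last lia.
by rewrite (_ : (k - m = (k - m).-1.+1)%N) 1?(_ : (k.+1 - m = (k - m).-1.+2)%N) //; lia.
Qed.

Definition tflatten (us : seq (seq K)) : seq (letter K) :=
  flatten [seq t :: Rword u | u <- us].

Definition normal_word p us e := nseq p.+1 tN ++ tflatten us ++ nseq e tN.

Definition wprime_word p us q m := nseq p tN ++ interleave us ++ nseq q tN ++ nseq m t.

Lemma size_tflatten us : size (tflatten us) = (size us + sumn (map size us))%N.
Proof. by elim: us => [|u us IH] //=; rewrite size_cat /= size_map IH; lia. Qed.

Lemma size_normal_word p us e :
  size (normal_word p us e) = (p.+1 + size us + sumn (map size us) + e)%N.
Proof. by rewrite /normal_word !size_cat !size_nseq size_tflatten; lia. Qed.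

Lemma wlength_nseq_tN_t e m : wlength (nseq (e + m) tN ++ nseq m t) = e.
Proof.
rewrite /wlength freered_nseq_tN_t addnK.
by case: ifP => le_em; rewrite size_nseq //; lia.
Qed.

Lemma wlength_wprime_word p (u : seq K) us e m :
  ((wlength (wprime_word p (u :: us) (e + m) m)).+2 <= size (normal_word p (u :: us) e))%N.
Proof.
rewrite /wprime_word [interleave _]/= -/(tflatten us) size_normal_word.
have := wlength_cat (nseq p tN) ((Rword u ++ tflatten us) ++ nseq (e + m) tN ++ nseq m t).
have := wlength_cat (Rword u ++ tflatten us) (nseq (e + m) tN ++ nseq m t).
rewrite wlength_nseq_tN_t size_cat size_map size_tflatten size_nseq /=; lia.
Qed.

Variable R : seq K.

Lemma overS_cat A B : overS R A -> overS R B -> overS R (A ++ B).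
Proof. by move=> SA SB a; rewrite mem_cat => /orP[/SA | /SB]. Qed.

Lemma overS_nseq n b : overS R (nseq n (inr b)).
Proof. by move=> a; rewrite mem_nseq => /andP[_ /eqP ->]. Qed.

Lemma overS_Rword u : {subset u <= R} -> overS R (Rword u).
Proof. by move=> uR a /mapP[r ur ->]; apply: uR. Qed.

Lemma overS_interleave (us : seq (seq K)) :
  (forall u, u \in us -> {subset u <= R}) -> overS R (interleave us).
Proof.
case: us => [|u us] usR a //=; rewrite mem_cat => /orP[].
  by apply: overS_Rword; apply: usR; rewrite mem_head.
case/flattenP=> _ /mapP[u' u'us ->]; rewrite inE => /predU1P[-> // |].
by apply: overS_Rword; apply: usR; rewrite inE u'us orbT.
Qed.

Lemma overS_wprime_word p (us : seq (seq K)) q m :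
  (forall u, u \in us -> {subset u <= R}) -> overS R (wprime_word p us q m).
Proof.
move=> usR; do !apply: overS_cat; by [apply: overS_nseq | apply: overS_interleave].
Qed.

End Words.

Section SemidirectWords.
Variables (K : zmodType) (phi : {additive K -> K}) (phiinv : K -> K).
Hypotheses (phiK : cancel phi phiinv) (phiinvK : cancel phiinv phi).

Local Notation t := (inr true : letter K).
Local Notation tN := (inr false : letter K).
Local Notation phipow := (phipow phi phiinv).
Local Notation mulG := (mulG phi phiinv).
Local Notation evalw := (evalw phi phiinv).

Lemma phiinvD : {morph phiinv : a b / a + b}.
Proof. by move=> a b; rewrite -{1}(phiinvK a) -{1}(phiinvK b) -raddfD phiK. Qed.

Lemma phipow1D s r : phipow (1 + s) r = phi (phipow s r).
Proof.
case: s => [n|[|n]].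
- by rewrite (_ : 1 + Posz n = Posz n.+1)%R //; lia.
- by rewrite /= phiinvK.
- by rewrite (_ : 1 + Negz n.+1 = Negz n)%R /= ?phiinvK // !NegzE; lia.
Qed.

Lemma phipowN1D s r : phipow (-1 + s) r = phiinv (phipow s r).
Proof.
case: s => [[|n]|n] //.
by rewrite (_ : -1 + Posz n.+1 = Posz n)%R /= ?phiK //; lia.
Qed.

Lemma mulG_letterK a : cancel (mulG (letter_val (letter_inv a))) (mulG (letter_val a)).
Proof.
case=> g1 g2; case: a => [r|[]]; rewrite /mulG /= !add0r.
- by rewrite addNKr.
- by rewrite phiinvK addNKr.
- by rewrite phiK addKr.
Qed.

Lemma evalw_cancel X a Y : evalw (X ++ a :: letter_inv a :: Y) = evalw (X ++ Y).
Proof. by elim: X => [|b X /= -> //]; apply: mulG_letterK. Qed.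

Lemma evalw_catr X Y Y' : evalw Y = evalw Y' -> evalw (X ++ Y) = evalw (X ++ Y').
Proof. by rewrite /evalw !foldr_cat => ->. Qed.

Lemma evalw_freered w : evalw (freered w) = evalw w.
Proof.
elim: w => [|a w IH] //; rewrite freered_cons [evalw (a :: w)]/=.
case: (freered w) IH => [|b w'] IH; first by rewrite -IH.
case: eqP => [-> | _] /= in IH *; last by rewrite IH.
by rewrite -IH /= mulG_letterK.
Qed.

Lemma evalw_exp_cat A Y : (evalw (A ++ Y)).2 = (evalw A).2 + (evalw Y).2.
Proof. by elim: A => [|a A /= ->]; rewrite ?add0r ?addrA. Qed.

Lemma evalw_insert A r Y :
  evalw (A ++ inl r :: Y) =
  ((evalw (A ++ Y)).1 + phipow (evalw A).2 r, (evalw (A ++ Y)).2).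
Proof.
elim: A => [|a A IH] /=; first by rewrite /mulG /= add0r addrC.
rewrite IH /mulG /=; congr (_, _).
case: a => [s|[]] /=.
- by rewrite add0r addrA.
- by rewrite raddfD phipow1D addrA.
- by rewrite phiinvD phipowN1D addrA.
Qed.

Lemma evalw_exp_nseq_tN k : (evalw (nseq k tN)).2 = - k%:Z.
Proof. by elim: k => [|k /= ->] //; lia. Qed.

Lemma evalw_exp_Rword u : (evalw (Rword u)).2 = 0.
Proof. by elim: u => [|r u /= ->]. Qed.

Lemma evalw_exp_tflatten us : (evalw (tflatten us)).2 = (size us)%:Z.
Proof.
elim: us => [|u us IH] //=.
by rewrite evalw_exp_cat evalw_exp_Rword IH; lia.
Qed.

Lemma evalw_exp_normal_word p us e :
  (evalw (normal_word p us e)).2 = (size us)%:Z - p.+1%:Z - e%:Z.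
Proof. by rewrite !evalw_exp_cat !evalw_exp_nseq_tN evalw_exp_tflatten; lia. Qed.

(* The block [u_p] sits at height 0, so a letter of [R] entering it acts by translation. *)
Lemma evalw_normal_word_insert p us1 u us2 e r : size us1 = p ->
  evalw (normal_word p (us1 ++ (r :: u) :: us2) e) =
  mulG (r, 0) (evalw (normal_word p (us1 ++ u :: us2) e)).
Proof.
move=> sz1; set A := nseq p.+1 tN ++ tflatten us1 ++ [:: t].
have split_nw u' : normal_word p (us1 ++ u' :: us2) e =
                   A ++ Rword u' ++ tflatten us2 ++ nseq e tN.
  by rewrite /normal_word /tflatten map_cat flatten_cat -!catA.
have expA : (evalw A).2 = 0.
  by rewrite !evalw_exp_cat evalw_exp_nseq_tN evalw_exp_tflatten sz1 /=; lia.
rewrite !split_nw [Rword _]/= evalw_insert expA.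
by case: (evalw _) => y n; rewrite /mulG /= add0r addrC.
Qed.

Variable R : seq K.

(* The padding [t^-1 t] in [normal_word] puts a [t] before every block.  The length bound
   is [|v| + 2] as soon as the exponent [d - p - e] of [v] is nonnegative; the slack for a
   negative exponent is what makes the invariant survive the induction. *)
Record normal_form_of (v : seq (letter K)) (p d e : nat) (us : seq (seq K)) : Prop :=
  NormalForm {
    nf_size_blocks : size us = d.+1;
    nf_p_le : (p <= d)%N;
    nf_e_le : (e <= d)%N;
    nf_blocksR : forall u, u \in us -> {subset u <= R};
    nf_evalw : evalw (normal_word p us e) = evalw v;
    nf_size_le : (size (normal_word p us e) <= size v + 2 + 2 * (p + e - d))%N }.

Lemma normal_form_nil : normal_form_of [::] 0 0 0 [:: [::]].
Proof.
split=> //; first by move=> u; rewrite inE => /eqP ->.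
exact: (mulG_letterK tN).
Qed.

Lemma normal_form_cons_inl r v p d e us : r \in R ->
  normal_form_of v p d e us ->
  normal_form_of (inl r :: v) p d e (take p us ++ (r :: nth [::] us p) :: drop p.+1 us).
Proof.
move=> rR [sz_us le_pd le_ed usR Enw size_nw].
have p_lt : (p < size us)%N by lia.
have us_split : us = take p us ++ nth [::] us p :: drop p.+1 us.
  by rewrite -drop_nth ?cat_take_drop.
have sz_take : size (take p us) = p by rewrite size_take p_lt.
split=> //.
- by rewrite size_cat /= size_drop sz_take; lia.
- move=> u; rewrite mem_cat inE => /or3P[/mem_take | /eqP -> | /mem_drop]; try exact: usR.
  by move=> s; rewrite inE => /predU1P[-> // | /usR]; apply; rewrite mem_nth.
- by rewrite evalw_normal_word_insert // -us_split Enw.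
- move: size_nw; rewrite {1}us_split !size_normal_word !size_cat !map_cat !sumn_cat /=.
  lia.
Qed.

Lemma normal_wordS p us e : normal_word p.+1 us e = tN :: normal_word p us e.
Proof. by []. Qed.

Lemma evalw_cons a w : evalw (a :: w) = mulG (letter_val a) (evalw w).
Proof. by []. Qed.

Lemma normal_form_cons_t v p d e us : normal_form_of v p d e us ->
  exists p' d' us', normal_form_of (t :: v) p' d' e us'.
Proof.
case=> sz_us le_pd le_ed usR Enw size_nw.
case: p le_pd Enw size_nw => [|p] le_pd Enw size_nw.
- exists 0%N, d.+1, ([::] :: us); split=> //.
  + by rewrite /= sz_us.
  + by lia.
  + by move=> u; rewrite inE => /predU1P[-> | /usR].
  + rewrite evalw_cons -Enw (evalw_cancel [::] tN).
    by symmetry; apply: (mulG_letterK t).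
  + by move: size_nw; rewrite !size_normal_word /=; lia.
- exists p, d, us; split=> //; first by lia.
  + by rewrite evalw_cons -Enw normal_wordS mulG_letterK.
  + by move: size_nw; rewrite !size_normal_word /=; lia.
Qed.

Lemma normal_form_cons_tN v p d e us : normal_form_of v p d e us ->
  exists p' d' e' us', normal_form_of (tN :: v) p' d' e' us'.
Proof.
case=> sz_us le_pd le_ed usR Enw size_nw.
have [lt_pd | eq_pd] : (p < d)%N \/ p = d by lia.
- exists p.+1, d, e, us; split=> //.
  + by rewrite normal_wordS evalw_cons Enw.
  + by move: size_nw; rewrite !size_normal_word /=; lia.
- subst p; exists d.+1, d.+1, e.+1, (rcons us [::]); split=> //.
  + by rewrite size_rcons sz_us.
  + by move=> u; rewrite mem_rcons inE => /predU1P[-> | /usR].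
  + rewrite [RHS]evalw_cons -Enw -evalw_cons -normal_wordS /normal_word.
    rewrite /tflatten map_rcons flatten_rcons -catA; do 2 apply: evalw_catr.
    exact: (evalw_cancel [::] t).
  + move: size_nw; rewrite !size_normal_word size_rcons map_rcons -cats1 sumn_cat /=.
    lia.
Qed.

Lemma normal_form_exists v : overS R v -> exists p d e us, normal_form_of v p d e us.
Proof.
elim: v => [|a v IH] Sav; first by exists 0%N, 0%N, 0%N, [:: [::]]; apply: normal_form_nil.
have [|p [d [e [us nf_v]]]] := IH; first by move=> b bv; apply: Sav; rewrite inE bv orbT.
case: a Sav => [r|[]] Sav.
- exists p, d, e; eexists; apply: normal_form_cons_inl nf_v.
  by apply: (Sav (inl r)); rewrite inE eqxx.
- by have [p' [d' [us' nf]]] := normal_form_cons_t nf_v; exists p', d', e, us'.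
- exact: normal_form_cons_tN nf_v.
Qed.

Lemma evalw_nseq_tN_t e m : evalw (nseq (e + m) tN ++ nseq m t) = evalw (nseq e tN).
Proof.
rewrite -evalw_freered freered_nseq_tN_t addnK.
case: ifP => // le_em; have -> : e = 0%N by lia.
by rewrite add0n subnn.
Qed.

Lemma evalw_normal_word_cons p u us e :
  evalw (normal_word p (u :: us) e) = evalw (nseq p tN ++ interleave (u :: us) ++ nseq e tN).
Proof.
rewrite /normal_word -addn1 nseqD -catA; apply: evalw_catr.
exact: (evalw_cancel [::] tN).
Qed.

Lemma evalw_wprime_word p u us e m :
  evalw (wprime_word p (u :: us) (e + m) m) = evalw (normal_word p (u :: us) e).
Proof.
rewrite evalw_normal_word_cons; do 2 apply: evalw_catr.
exact: evalw_nseq_tN_t.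
Qed.

Lemma geodesic_of_shortest v W :
  overS R W -> evalw W = evalw v ->
  (forall w, overS R w -> evalw w = evalw v -> (size v <= size w)%N) ->
  (wlength W <= size v)%N -> geodesic phi phiinv R W.
Proof.
move=> SW EW vmin le_Wv; split=> //; split.
- exists (freered W); split=> //; last exact: evalw_freered.
  by move=> a /mem_freered; apply: SW.
- by move=> w Sw Ew; apply: leq_trans le_Wv (vmin w Sw _); rewrite Ew EW.
Qed.

End SemidirectWords.

Theorem lemma2p1 (K : zmodType) (phi : {additive K -> K}) (phiinv : K -> K)
  (phiK : cancel phi phiinv) (phiinvK : cancel phiinv phi)
  (R : seq K) (Rsym : forall r, r \in R -> - r \in R)
  (Sgen : forall g : K * int, exists w, overS R w /\ evalw phi phiinv w = g)
  (x : K) (m : nat) :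
  exists w, inWprime phi phiinv R w /\ evalw phi phiinv w = (x, m%:Z).
Proof.
have [v [[Sv Ev] vmin]] := exists_shortest (Sgen (x, m%:Z)).
have [p [d [e [[|u us] nf]]]] := normal_form_exists phiK phiinvK Sv; first by case: nf.
case: nf => sz_us le_pd le_ed usR Enw size_nw.
have exp_nw := evalw_exp_normal_word phi phiinv p (u :: us) e.
rewrite Enw Ev sz_us /= in exp_nw.
have def_d : d = (p + (e + m))%N by lia.
exists (wprime_word p (u :: us) (e + m) m).
have Ew : evalw phi phiinv (wprime_word p (u :: us) (e + m) m) = (x, m%:Z).
  by rewrite evalw_wprime_word // Enw.
split=> //; split.
- apply: (geodesic_of_shortest phiK phiinvK (v := v)); rewrite ?Ew ?Ev //.
  + exact: overS_wprime_word.
  + by move=> w Sw Ew'; apply: vmin.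
  + by move: (wlength_wprime_word p u us e m) size_nw; lia.
- by exists p, (e + m), m, (u :: us); split; rewrite ?sz_us ?def_d.
Qed.
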